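(* Let $X>0$ and let $w:[0,X]\to\mathbb{R}$ be a smooth function with $w''(x)\ge w(x)$ and $w(x)\ge0$ for all $x\in[0,X]$, and $w'(0)\ge0$. Let $p:[0,X]\to\mathbb{R}^+$ be a decreasing integrable function. Then \[\int_0^Xp(x)w(x)\,dx\le\Big(\frac{p(0)}{\cosh(X/2)}+p(X/2)\Big)\int_0^Xw(x)\,dx.\] *)

From Stdlib Require Export Reals.
From Coquelicot Require Export Coquelicot.
Open Scope R_scope.

Definition smooth (w : R -> R) : Prop := forall (n : nat) (x : R), ex_derive_n w n x.

From Stdlib Require Import Lra Lia.
Open Scope R_scope.

(* With H = X/2, bound p by p 0 on [0, H] and by p H on [H, X].  Applying the
   comparison principle for u'' >= u to w - w t * cosh (. - t) gives
   w (t + H) >= cosh H * w t, hence cosh H * int_0^H w <= int_H^X w: the first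
   half carries at most a fraction 1 / cosh H of the integral of w.  Since p is
   only Riemann integrable, integrability of p w needs an argument of its own:
   w is Lipschitz on [0, X], so p w is a uniform limit of p times step functions. *)

Lemma MVT_interval (f df : R -> R) (a b : R) : a <= b ->
  (forall x, a <= x <= b -> is_derive f x (df x)) ->
  exists c, a <= c <= b /\ f b - f a = df c * (b - a).
Proof.
  intros hab hf.
  assert (hmin : Rmin a b = a) by (apply Rmin_left; lra).
  assert (hmax : Rmax a b = b) by (apply Rmax_right; lra).
  destruct (MVT_gen f a b df) as [c hc]; simpl; rewrite hmin, hmax in *.
  - intros x hx. apply hf. lra.
  - intros x hx. apply continuity_pt_filterlim.
    apply (@ex_derive_continuous R_AbsRing R_NormedModule).
    exists (df x). now apply hf.
  - now exists c.
Qed.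

Lemma nondecreasing_of_derive_nonneg (f df : R -> R) (a b : R) :
  (forall x, a <= x <= b -> is_derive f x (df x)) ->
  (forall x, a <= x <= b -> 0 <= df x) ->
  forall x y, a <= x -> x <= y -> y <= b -> f x <= f y.
Proof.
  intros hf hdf x y hax hxy hyb.
  destruct (MVT_interval f df x y hxy) as [c [hc e]].
  - intros z hz. apply hf. lra.
  - assert (0 <= df c * (y - x)) by (apply Rmult_le_pos; [apply hdf|]; lra).
    lra.
Qed.

Lemma lipschitz_of_derive_bounded (f df : R -> R) (a b L : R) :
  (forall x, a <= x <= b -> is_derive f x (df x)) ->
  (forall x, a <= x <= b -> Rabs (df x) <= L) ->
  forall x y, a <= x <= b -> a <= y <= b -> Rabs (f x - f y) <= L * Rabs (x - y).
Proof.
  intros hf hdf.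
  assert (hle : forall x y, a <= x -> x <= y -> y <= b ->
            Rabs (f x - f y) <= L * Rabs (x - y)).
  { intros x y hax hxy hyb.
    destruct (MVT_interval f df x y hxy) as [c [hc e]].
    - intros z hz. apply hf. lra.
    - rewrite Rabs_minus_sym, (Rabs_minus_sym x), e, Rabs_mult.
      apply Rmult_le_compat_r; [apply Rabs_pos | apply hdf; lra]. }
  intros x y hx hy.
  destruct (Rle_dec x y) as [hxy | hxy].
  - apply hle; lra.
  - rewrite Rabs_minus_sym, (Rabs_minus_sym x). apply hle; lra.
Qed.

Section Supersolution.
Variables (u du ddu : R -> R) (a b : R).
Hypotheses (hu : forall x, a <= x <= b -> is_derive u x (du x))
  (hdu : forall x, a <= x <= b -> is_derive du x (ddu x))
  (hsuper : forall x, a <= x <= b -> u x <= ddu x).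

(* [exp (-x) (u' + u)] and then [exp x u] are nondecreasing. *)
Lemma supersolution_nonneg :
  0 <= u a -> 0 <= du a -> forall x, a <= x <= b -> 0 <= u x.
Proof.
  intros hua hdua.
  assert (hsum : forall x, a <= x <= b -> 0 <= du x + u x).
  { intros x hx.
    assert (hmono : exp (- a) * (du a + u a) <= exp (- x) * (du x + u x)).
    { apply (nondecreasing_of_derive_nonneg (fun z => exp (- z) * (du z + u z))
             (fun z => exp (- z) * (ddu z - u z)) a b); try lra.
      - intros z hz. auto_derive.
        + split; [exists (ddu z); now apply hdu|split; [exists (du z); now apply hu|easy]].
        + replace (Derive (fun y => du y) z) with (ddu z)
            by (symmetry; apply is_derive_unique; now apply hdu).
          replace (Derive (fun y => u y) z) with (du z)
            by (symmetry; apply is_derive_unique; now apply hu).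
          ring.
      - intros z hz. apply Rmult_le_pos; [apply Rlt_le, exp_pos|].
        specialize (hsuper z hz). lra. }
    pose proof (exp_pos (- a)). pose proof (exp_pos (- x)). nra. }
  intros x hx.
  assert (hmono : exp a * u a <= exp x * u x).
  { apply (nondecreasing_of_derive_nonneg (fun z => exp z * u z)
           (fun z => exp z * (du z + u z)) a b); try lra.
    - intros z hz. auto_derive.
      + exists (du z). now apply hu.
      + replace (Derive (fun y => u y) z) with (du z)
          by (symmetry; apply is_derive_unique; now apply hu).
        ring.
    - intros z hz. apply Rmult_le_pos; [apply Rlt_le, exp_pos | now apply hsum]. }
  pose proof (exp_pos a). pose proof (exp_pos x). nra.
Qed.

End Supersolution.

Lemma is_RInt_shift (f : R -> R) (a b v l : R) :
  is_RInt f (a + v) (b + v) l -> is_RInt (fun x => f (x + v)) a b l.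
Proof.
  intros hf. apply (@is_RInt_ext R_NormedModule (fun x => scal 1 (f (1 * x + v)))).
  - intros x _. change (1 * f (1 * x + v) = f (x + v)). now rewrite !Rmult_1_l.
  - apply (@is_RInt_comp_lin R_NormedModule). now rewrite !Rmult_1_l.
Qed.

Section SmoothSupersolution.
Variables (X : R) (w : R -> R).
Hypotheses (hw : smooth w)
  (hw2 : forall x, 0 <= x <= X -> Derive_n w 2 x >= w x)
  (hw0 : forall x, 0 <= x <= X -> w x >= 0)
  (hw'0 : Derive w 0 >= 0).

Lemma is_derive_smooth x : is_derive w x (Derive w x).
Proof. apply Derive_correct, (hw 1%nat). Qed.

Lemma is_derive_Derive_smooth x : is_derive (Derive w) x (Derive_n w 2 x).
Proof. apply Derive_correct, (hw 2%nat). Qed.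

Lemma Derive_nondecreasing x y : 0 <= x -> x <= y -> y <= X -> Derive w x <= Derive w y.
Proof.
  apply (nondecreasing_of_derive_nonneg _ (Derive_n w 2) 0 X).
  - intros z _. apply is_derive_Derive_smooth.
  - intros z hz. specialize (hw2 z hz). specialize (hw0 z hz). lra.
Qed.

Lemma lipschitz_Derive_end x y : 0 <= x <= X -> 0 <= y <= X ->
  Rabs (w x - w y) <= Derive w X * Rabs (x - y).
Proof.
  apply (lipschitz_of_derive_bounded w (Derive w)).
  - intros z _. apply is_derive_smooth.
  - intros z hz. rewrite Rabs_pos_eq.
    + apply Derive_nondecreasing; lra.
    + pose proof (Derive_nondecreasing 0 z). lra.
Qed.

(* [w - w t * cosh (. - t)] is again a supersolution, vanishing at [t] with nonnegative slope. *)
Lemma cosh_mul_le_shift t s : 0 <= t -> 0 <= s -> t + s <= X -> w t * cosh s <= w (t + s).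
Proof.
  intros ht hs hts.
  enough (0 <= w (t + s) - w t * cosh (t + s - t))
    by (replace (t + s - t) with s in * by ring; lra).
  apply (supersolution_nonneg (fun x => w x - w t * cosh (x - t))
    (fun x => Derive w x - w t * sinh (x - t))
    (fun x => Derive_n w 2 x - w t * cosh (x - t)) t (t + s)); cbv beta; try lra.
  - intros x _. auto_derive; [apply (hw 1%nat)|].
    change (fun y => w y) with w. unfold Rminus. ring.
  - intros x _. auto_derive; [apply (hw 2%nat)|].
    change (Derive (fun y => Derive w y) x) with (Derive_n w 2 x).
    unfold Rminus. ring.
  - intros x hx. specialize (hw2 x ltac:(lra)). lra.
  - rewrite Rminus_eq_0, cosh_0. lra.
  - rewrite Rminus_eq_0, sinh_0. pose proof (Derive_nondecreasing 0 t). lra.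
Qed.

Lemma ex_RInt_smooth a b : ex_RInt w a b.
Proof.
  apply (@ex_RInt_continuous R_CompleteNormedModule). intros z _.
  apply (@ex_derive_continuous R_AbsRing R_NormedModule), (hw 1%nat).
Qed.

Lemma cosh_mul_RInt_le_shift H : 0 <= H -> H + H <= X ->
  cosh H * RInt w 0 H <= RInt w H (H + H).
Proof.
  intros hH hHX.
  apply (is_RInt_le (fun t => cosh H * w t) (fun t => w (t + H)) 0 H); [lra | | |].
  - apply (@is_RInt_scal R_NormedModule w), (@RInt_correct R_CompleteNormedModule),
      ex_RInt_smooth.
  - apply is_RInt_shift. rewrite Rplus_0_l.
    apply (@RInt_correct R_CompleteNormedModule), ex_RInt_smooth.
  - intros t ht. rewrite Rmult_comm. apply cosh_mul_le_shift; lra.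
Qed.

End SmoothSupersolution.

Definition clamp (a b x : R) : R := Rmax a (Rmin b x).

Lemma clamp_in a b x : a <= b -> a <= clamp a b x <= b.
Proof. intros. unfold clamp, Rmax, Rmin. repeat destruct Rle_dec; lra. Qed.

Lemma clamp_id a b x : a <= x <= b -> clamp a b x = x.
Proof. intros. unfold clamp, Rmax, Rmin. repeat destruct Rle_dec; lra. Qed.

Definition grid_floor (a h x : R) : R := a + h * IZR (Int_part ((x - a) / h)).

Lemma grid_floor_spec a h x : 0 < h -> grid_floor a h x <= x < grid_floor a h x + h.
Proof.
  intros hh. unfold grid_floor.
  destruct (base_Int_part ((x - a) / h)) as [h1 h2].
  assert (e : x - a = h * ((x - a) / h)) by (field; lra).
  split; nra.
Qed.

Lemma grid_floor_ge a h x : 0 < h -> a <= x -> a <= grid_floor a h x.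
Proof.
  intros hh hx. unfold grid_floor.
  destruct (base_Int_part ((x - a) / h)) as [_ h2].
  assert (0 <= (x - a) / h) by (apply Rdiv_le_0_compat; lra).
  assert (hk : (-1 < Int_part ((x - a) / h))%Z) by (apply lt_IZR; lra).
  assert (0 <= IZR (Int_part ((x - a) / h))) by (apply IZR_le; lia).
  nra.
Qed.

Lemma grid_floor_cell a h x (k : nat) : 0 < h ->
  a + INR k * h <= x < a + INR k * h + h -> grid_floor a h x = a + INR k * h.
Proof.
  intros hh hx. unfold grid_floor.
  rewrite <- (Int_part_spec ((x - a) / h) (Z.of_nat k)), <- INR_IZR_INZ; [ring|].
  rewrite <- INR_IZR_INZ.
  assert (e : (x - a) / h = INR k + (x - (a + INR k * h)) / h) by (field; lra).
  assert (0 <= (x - (a + INR k * h)) / h) by (apply Rdiv_le_0_compat; lra).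
  assert ((x - (a + INR k * h)) / h < 1) by (apply (Rdiv_lt_1 _ h); lra).
  lra.
Qed.

Section LipschitzProduct.
Variables (a b M L : R) (p w : R -> R).
Hypotheses (hab : a < b) (hp : ex_RInt p a b)
  (hpM : forall x, a <= x <= b -> Rabs (p x) <= M)
  (hwL : forall x y, a <= x <= b -> a <= y <= b -> Rabs (w x - w y) <= L * Rabs (x - y)).

(* Clamping makes the approximants converge uniformly on all of [R], as [filterlim_RInt] needs. *)
Let pw x := p (clamp a b x) * w (clamp a b x).
Let step_approx h x := p (clamp a b x) * w (grid_floor a h (clamp a b x)).
Let mesh (n : nat) := (b - a) / INR (S n).

Lemma bound_nonneg : 0 <= M.
Proof. apply Rle_trans with (Rabs (p a)); [apply Rabs_pos | apply hpM; lra]. Qed.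

Lemma lipschitz_const_nonneg : 0 <= L.
Proof.
  assert (0 < Rabs (a - b)) by (apply Rabs_pos_lt; lra).
  pose proof (hwL a b ltac:(lra) ltac:(lra)). pose proof (Rabs_pos (w a - w b)). nra.
Qed.

Lemma mesh_pos n : 0 < mesh n.
Proof. apply Rdiv_lt_0_compat; [lra | apply lt_0_INR; lia]. Qed.

Lemma ex_RInt_step_approx n : ex_RInt (step_approx (mesh n)) a b.
Proof.
  pose proof (mesh_pos n) as hh.
  assert (hgrid : INR (S n) * mesh n = b - a)
    by (unfold mesh; field; apply not_0_INR; lia).
  assert (cells : forall k, (k <= S n)%nat ->
            ex_RInt (step_approx (mesh n)) a (a + INR k * mesh n)).
  { induction k as [|k IH]; intros hk.
    - rewrite Rmult_0_l, Rplus_0_r. apply ex_RInt_point.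
    - assert (hkb : INR (S k) * mesh n <= INR (S n) * mesh n)
        by (apply Rmult_le_compat_r; [lra | apply le_INR; lia]).
      rewrite S_INR, Rmult_plus_distr_r, Rmult_1_l in hkb |- *. rewrite <- Rplus_assoc.
      assert (0 <= INR k * mesh n) by (apply Rmult_le_pos; [apply pos_INR | lra]).
      apply ex_RInt_Chasles with (a + INR k * mesh n); [apply IH; lia|].
      apply ex_RInt_ext with (fun x => scal (w (a + INR k * mesh n)) (p x)).
      + rewrite Rmin_left, Rmax_right by lra. intros x hx.
        unfold step_approx. rewrite clamp_id, (grid_floor_cell a (mesh n) x k) by lra.
        apply Rmult_comm.
      + apply (@ex_RInt_scal R_NormedModule).
        apply (@ex_RInt_Chasles_1 R_CompleteNormedModule _ _ _ b); [lra|].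
        apply (@ex_RInt_Chasles_2 R_CompleteNormedModule _ a); [lra | exact hp]. }
  specialize (cells (S n) (le_n _)).
  now replace (a + INR (S n) * mesh n) with b in cells by lra.
Qed.

Lemma step_approx_dist h x : 0 < h -> Rabs (step_approx h x - pw x) <= M * L * h.
Proof.
  intros hh. unfold step_approx, pw.
  pose proof (clamp_in a b x (Rlt_le _ _ hab)) as hc.
  set (c := clamp a b x) in *.
  pose proof (grid_floor_spec a h c hh) as hs.
  pose proof (grid_floor_ge a h c hh (proj1 hc)) as hsa.
  set (s := grid_floor a h c) in *.
  assert (hpc := hpM c hc).
  assert (hws : Rabs (w s - w c) <= L * h).
  { apply Rle_trans with (L * Rabs (s - c)); [apply hwL; lra|].
    apply Rmult_le_compat_l; [apply lipschitz_const_nonneg|]. rewrite Rabs_left1; lra. }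
  replace (p c * w s - p c * w c) with (p c * (w s - w c)) by ring.
  rewrite Rabs_mult, Rmult_assoc.
  apply Rmult_le_compat; [apply Rabs_pos | apply Rabs_pos | exact hpc | exact hws].
Qed.

Lemma mesh_small eps : 0 < eps -> exists N, forall n, (N <= n)%nat -> M * L * mesh n < eps.
Proof.
  intros heps.
  set (K := M * L * (b - a)).
  assert (hK : 0 <= K).
  { pose proof bound_nonneg. pose proof lipschitz_const_nonneg.
    unfold K. apply Rmult_le_pos; [apply Rmult_le_pos|]; lra. }
  destruct (archimed_cor1 (eps / (K + 1))) as [N [hN hN0]].
  { apply Rdiv_lt_0_compat; lra. }
  exists N. intros n hn.
  assert (hNn : / INR (S n) <= / INR N)
    by (apply Rinv_le_contravar; [apply lt_0_INR | apply le_INR]; lia).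
  assert (0 < / INR (S n)) by (apply Rinv_0_lt_compat, lt_0_INR; lia).
  replace (M * L * mesh n) with (K * / INR (S n)) by (unfold K, mesh; field; apply not_0_INR; lia).
  apply Rle_lt_trans with ((K + 1) * / INR N).
  - apply Rmult_le_compat; lra.
  - apply (Rmult_lt_compat_l (K + 1)) in hN; [|lra].
    now replace ((K + 1) * (eps / (K + 1))) with eps in hN by (field; lra).
Qed.

Lemma ex_RInt_mult_lipschitz : ex_RInt (fun x => p x * w x) a b.
Proof.
  destruct (@filterlim_RInt nat R_CompleteNormedModule (fun n => step_approx (mesh n)) a b
    Hierarchy.eventually eventually_filter pw (fun n => RInt (step_approx (mesh n)) a b))
    as [I [_ hI]].
  - intros n. apply RInt_correct, ex_RInt_step_approx.
  - intros P [eps hP]. destruct (mesh_small eps (cond_pos eps)) as [N hN].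
    exists N. intros n hn. apply hP. intros t.
    change (Rabs (step_approx (mesh n) t - pw t) < eps).
    eapply Rle_lt_trans; [apply step_approx_dist, mesh_pos | now apply hN].
  - exists I. apply (is_RInt_ext pw); [|exact hI].
    rewrite Rmin_left, Rmax_right by lra. intros x hx. unfold pw. now rewrite clamp_id by lra.
Qed.

End LipschitzProduct.

Lemma RInt_mult_le_const (p w : R -> R) (a b C : R) : a <= b ->
  ex_RInt (fun x => p x * w x) a b -> ex_RInt w a b ->
  (forall x, a < x < b -> 0 <= w x) -> (forall x, a < x < b -> p x <= C) ->
  RInt (fun x => p x * w x) a b <= C * RInt w a b.
Proof.
  intros hab hpw hw hw0 hpC.
  assert (hscal := @RInt_scal R_CompleteNormedModule w a b C hw).
  change (RInt (fun x => C * w x) a b = C * RInt w a b) in hscal. rewrite <- hscal.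
  apply RInt_le; [exact hab | exact hpw | now apply (@ex_RInt_scal R_NormedModule) |].
  intros x hx. apply Rmult_le_compat_r; [apply hw0 | apply hpC]; exact hx.
Qed.

Lemma two_halves_bound (J1 J2 I1 I2 c q0 qH : R) :
  0 < c -> 0 <= q0 -> 0 <= qH -> 0 <= I1 -> c * I1 <= I2 ->
  J1 <= q0 * I1 -> J2 <= qH * I2 -> J1 + J2 <= (q0 / c + qH) * (I1 + I2).
Proof.
  intros hc hq0 hqH hI1 hcI hJ1 hJ2.
  assert (q0 * I1 <= q0 / c * (I1 + I2)).
  { replace (q0 * I1) with (q0 / c * (c * I1)) by (field; lra).
    apply Rmult_le_compat_l; [apply Rmult_le_pos, Rlt_le, Rinv_0_lt_compat |]; lra. }
  assert (0 <= qH * I1) by (apply Rmult_le_pos; lra).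
  lra.
Qed.

Theorem proposition5p4 (X : R) (w p : R -> R)
  (hX : 0 < X)
  (hw : smooth w)
  (hw2 : forall x, 0 <= x <= X -> Derive_n w 2 x >= w x)
  (hw0 : forall x, 0 <= x <= X -> w x >= 0)
  (hw'0 : Derive w 0 >= 0)
  (hp_pos : forall x, 0 <= x <= X -> 0 < p x)
  (hp_dec : forall x y, 0 <= x -> x <= y -> y <= X -> p y <= p x)
  (hp_int : ex_RInt p 0 X) :
  RInt (fun x => p x * w x) 0 X <= (p 0 / cosh (X / 2) + p (X / 2)) * RInt w 0 X.
Proof.
  set (H := X / 2).
  assert (hXH : X = H + H) by (unfold H; field).
  assert (hw0' : forall x, 0 <= x <= X -> 0 <= w x)
    by (intros x hx; specialize (hw0 x hx); lra).
  assert (hwI := ex_RInt_smooth w hw).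
  assert (hpw : ex_RInt (fun x => p x * w x) 0 X).
  { apply (ex_RInt_mult_lipschitz 0 X (p 0) (Derive w X)); [lra | exact hp_int | |].
    - intros x hx. rewrite Rabs_pos_eq; [apply hp_dec | apply Rlt_le, hp_pos]; lra.
    - exact (lipschitz_Derive_end X w hw hw2 hw0 hw'0). }
  assert (hpw1 : ex_RInt (fun x => p x * w x) 0 H)
    by (apply (@ex_RInt_Chasles_1 R_CompleteNormedModule _ _ _ X); [lra | exact hpw]).
  assert (hpw2 : ex_RInt (fun x => p x * w x) H X)
    by (apply (@ex_RInt_Chasles_2 R_CompleteNormedModule _ 0); [lra | exact hpw]).
  rewrite <- (@RInt_Chasles R_CompleteNormedModule _ 0 H X hpw1 hpw2),
    <- (@RInt_Chasles R_CompleteNormedModule w 0 H X (hwI _ _) (hwI _ _)).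
  apply two_halves_bound.
  - unfold cosh. pose proof (exp_pos H). pose proof (exp_pos (- H)). lra.
  - apply Rlt_le, hp_pos; lra.
  - apply Rlt_le, hp_pos; lra.
  - apply RInt_ge_0; [lra | apply hwI | intros x hx; apply hw0'; lra].
  - rewrite hXH. apply (cosh_mul_RInt_le_shift X w hw hw2 hw0 hw'0); lra.
  - apply RInt_mult_le_const; [lra | exact hpw1 | apply hwI | intros x hx; apply hw0'; lra |].
    intros x hx. apply hp_dec; lra.
  - apply RInt_mult_le_const; [lra | exact hpw2 | apply hwI | intros x hx; apply hw0'; lra |].
    intros x hx. apply hp_dec; lra.
Qed.
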